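(* Let $B\ge1$, $\mathcal{E}>0$, $c>0$, and $\mathsf{MSE}(\mathbf{i},\mathbf{t})=c\sum_{b=0}^{B-1}4^b\exp(-2(i_b-1)t_b)$. Let $\mathbf{i}^{(0)}=(2,\dots,2)$, $\mathbf{t}^{(0)}=\frac{\mathcal{E}}{4B}(1,\dots,1)$ (uniform energy allocation), and let $\widetilde{\mathbf{t}}$ be the optimal solution of minimizing $\sum_b4^b\exp(-2t_b)$ subject to $\sum_b 4t_b\le\mathcal{E}$, $t_b\ge0$. If $\mathcal{E}>2B(B-1)\log2$, then $$\mathsf{MSE}(\mathbf{i}^{(0)},\widetilde{\mathbf{t}})=c\cdot\frac{B}{2}\cdot2^B\exp\Bigl(-\frac{\mathcal{E}}{2B}\Bigr),\qquad \mathsf{MSE}(\mathbf{i}^{(0)},\mathbf{t}^{(0)})=c\cdot\frac{4^B-1}{3}\exp\Bigl(-\frac{\mathcal{E}}{2B}\Bigr),$$ and hence $$\gamma=\frac{\mathsf{MSE}(\mathbf{i}^{(0)},\widetilde{\mathbf{t}})}{\mathsf{MSE}(\mathbf{i}^{(0)},\mathbf{t}^{(0)})}=\frac{3B}{2}\cdot\frac{2^B}{4^B-1}.$$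
   Context: $\log$ denotes the natural logarithm. $\widetilde{\mathbf{t}}$ is the output of one step of alternate convex search (duration update) with currents fixed at $i_b=2$ for all $b$. *)

From Stdlib Require Import Reals Lra Lia.
Open Scope R_scope.

Fixpoint rsum (n : nat) (f : nat -> R) : R :=
  match n with
  | O => 0
  | S m => rsum m f + f m
  end.

Definition MSE (c : R) (B : nat) (i t : nat -> R) : R :=
  c * rsum B (fun b => 4 ^ b * exp (- 2 * (i b - 1) * t b)).

(* objective of the duration-update subproblem with i_b = 2 *)
Definition dur_obj (B : nat) (t : nat -> R) : R :=
  rsum B (fun b => 4 ^ b * exp (- 2 * t b)).

Definition dur_feasible (B : nat) (E : R) (t : nat -> R) : Prop :=
  rsum B (fun b => 4 * t b) <= E /\ (forall b, (b < B)%nat -> 0 <= t b).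

Definition dur_optimal (B : nat) (E : R) (t : nat -> R) : Prop :=
  dur_feasible B E t /\ forall t', dur_feasible B E t' -> dur_obj B t <= dur_obj B t'.

Definition i0 : nat -> R := fun _ => 2.
Definition t0 (B : nat) (E : R) : nat -> R := fun _ => E / (4 * INR B).

From Stdlib Require Import Reals Lra Lia.
Open Scope R_scope.

(* Water-filling: the allocation [t_b = b ln 2 + a] equalises the terms
   [4^b exp(-2 t_b)] to a common value [K = exp(-2a)], and the level [a] is fixed
   by spending the whole budget [sum 4 t_b = E]; the hypothesis on [E] is exactly
   [a > 0], i.e. feasibility.  By convexity of [exp], the objective at any [t]
   is at least its tangent approximation at this allocation, which is
   [B K - 2 K (sum t_b - E/4) >= B K] for feasible [t].  Hence the optimal value
   is [B K = (B/2) 2^B exp(-E/(2B))], whereas the uniform allocation gives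
   [exp(-E/(2B)) sum 4^b = (4^B - 1)/3 exp(-E/(2B))]. *)

Lemma rsum_ext n f g : (forall b, (b < n)%nat -> f b = g b) -> rsum n f = rsum n g.
Proof.
  induction n as [|n IH]; intros Hfg; simpl; [reflexivity|].
  rewrite IH by (intros; apply Hfg; lia). rewrite Hfg by lia. reflexivity.
Qed.

Lemma rsum_le n f g : (forall b, (b < n)%nat -> f b <= g b) -> rsum n f <= rsum n g.
Proof.
  induction n as [|n IH]; intros Hfg; simpl; [lra|].
  assert (rsum n f <= rsum n g) by (apply IH; intros; apply Hfg; lia).
  assert (f n <= g n) by (apply Hfg; lia).
  lra.
Qed.

Lemma rsum_plus n f g : rsum n (fun b => f b + g b) = rsum n f + rsum n g.
Proof. induction n as [|n IH]; simpl; [ring|]. rewrite IH. ring. Qed.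

Lemma rsum_scal n a f : rsum n (fun b => a * f b) = a * rsum n f.
Proof. induction n as [|n IH]; simpl; [ring|]. rewrite IH. ring. Qed.

Lemma rsum_const n a : rsum n (fun _ => a) = INR n * a.
Proof. induction n as [|n IH]; simpl rsum; [simpl; ring|]. rewrite IH, S_INR. ring. Qed.

Lemma rsum_INR n : rsum n INR = INR n * (INR n - 1) / 2.
Proof. induction n as [|n IH]; simpl rsum; [simpl; field|]. rewrite IH, S_INR. field. Qed.

Lemma rsum_pow n x : x <> 1 -> rsum n (pow x) = (x ^ n - 1) / (x - 1).
Proof.
  intros Hx. assert (x - 1 <> 0) by lra.
  induction n as [|n IH]; simpl rsum; [simpl; field; assumption|].
  rewrite IH. simpl pow. field. assumption.
Qed.

Lemma exp_INR_mult_ln n x : 0 < x -> exp (INR n * ln x) = x ^ n.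
Proof. intros Hx. rewrite <- Rpower_pow by exact Hx. reflexivity. Qed.

Lemma ln2_pos : 0 < ln 2.
Proof. rewrite <- ln_1. apply ln_increasing; lra. Qed.

Lemma pow4_exp_shift_ln2 n x : 4 ^ n * exp (-2 * (INR n * ln 2 + x)) = exp (-2 * x).
Proof.
  replace (-2 * (INR n * ln 2 + x)) with (-2 * x + - (INR n * ln 2) + - (INR n * ln 2))
    by ring.
  rewrite !exp_plus, !exp_Ropp, exp_INR_mult_ln by lra.
  replace 4 with (2 * 2) by ring. rewrite Rpow_mult_distr.
  assert (0 < 2 ^ n) by (apply pow_lt; lra).
  field. lra.
Qed.

Lemma MSE_i0 c B t : MSE c B i0 t = c * dur_obj B t.
Proof.
  unfold MSE, dur_obj, i0. f_equal. apply rsum_ext. intros b _.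
  do 3 f_equal. ring.
Qed.

Lemma weighted_exp_ge_tangent w u v :
  0 <= w -> w * exp (-2 * v) * (1 - 2 * (u - v)) <= w * exp (-2 * u).
Proof.
  intros Hw.
  replace (w * exp (-2 * u)) with (w * exp (-2 * v) * exp (-2 * (u - v))).
  - pose proof (exp_ineq1_le (-2 * (u - v))).
    pose proof (exp_pos (-2 * v)).
    apply Rmult_le_compat_l; [apply Rmult_le_pos; lra | lra].
  - rewrite Rmult_assoc, <- exp_plus. do 2 f_equal. ring.
Qed.

Lemma dur_obj_ge_tangent B t s :
  dur_obj B s - 2 * rsum B (fun b => 4 ^ b * exp (-2 * s b) * (t b - s b))
  <= dur_obj B t.
Proof.
  apply Rle_trans
    with (rsum B (fun b => 4 ^ b * exp (-2 * s b) * (1 - 2 * (t b - s b)))).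
  - right.
    rewrite (rsum_ext B (fun b => 4 ^ b * exp (-2 * s b) * (1 - 2 * (t b - s b)))
                        (fun b => 4 ^ b * exp (-2 * s b)
                                    + -2 * (4 ^ b * exp (-2 * s b) * (t b - s b))))
      by (intros; ring).
    rewrite rsum_plus, rsum_scal. unfold dur_obj. ring.
  - apply rsum_le. intros b _. apply weighted_exp_ge_tangent, pow_le. lra.
Qed.

Section WaterFilling.

Variables (B : nat) (E : R).
Hypothesis B_pos : (1 <= B)%nat.

Definition water_level : R := (E - 2 * INR B * (INR B - 1) * ln 2) / (4 * INR B).

Definition water_filling (b : nat) : R := INR b * ln 2 + water_level.

Let INR_B_ge1 : 1 <= INR B.
Proof. apply (le_INR 1). exact B_pos. Qed.

Lemma water_filling_budget : rsum B (fun b => 4 * water_filling b) = E.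
Proof.
  unfold water_filling.
  rewrite (rsum_ext B _ (fun b => (4 * ln 2) * INR b + 4 * water_level))
    by (intros; ring).
  rewrite rsum_plus, rsum_scal, rsum_INR, rsum_const.
  unfold water_level. field. lra.
Qed.

Lemma water_filling_feasible :
  2 * INR B * (INR B - 1) * ln 2 <= E -> dur_feasible B E water_filling.
Proof.
  intros HE. split.
  - rewrite water_filling_budget. lra.
  - intros b _. unfold water_filling, water_level.
    assert (0 <= (E - 2 * INR B * (INR B - 1) * ln 2) / (4 * INR B))
      by (apply Rle_mult_inv_pos; lra).
    pose proof (pos_INR b). pose proof ln2_pos. nra.
Qed.

Lemma dur_obj_water_filling : dur_obj B water_filling = INR B * exp (-2 * water_level).
Proof.
  unfold dur_obj, water_filling.
  rewrite (rsum_ext B _ (fun _ => exp (-2 * water_level)))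
    by (intros; apply pow4_exp_shift_ln2).
  apply rsum_const.
Qed.

Lemma dur_obj_ge_water_filling t :
  dur_feasible B E t -> INR B * exp (-2 * water_level) <= dur_obj B t.
Proof.
  intros [Hbudget _].
  set (K := exp (-2 * water_level)).
  assert (Hslack : rsum B (fun b => 4 ^ b * exp (-2 * water_filling b) * (t b - water_filling b))
                   = K / 4 * (rsum B (fun b => 4 * t b) - E)).
  { rewrite <- water_filling_budget.
    rewrite (rsum_ext B _ (fun b => K / 4 * (4 * t b) + - (K / 4) * (4 * water_filling b))).
    - rewrite rsum_plus, !rsum_scal. ring.
    - intros b _. unfold water_filling at 1. rewrite pow4_exp_shift_ln2. fold K. field. }
  pose proof (dur_obj_ge_tangent B t water_filling) as Htangent.
  rewrite Hslack, dur_obj_water_filling in Htangent. fold K in Htangent.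
  assert (0 < K) by apply exp_pos.
  nra.
Qed.

Lemma dur_optimal_value t :
  2 * INR B * (INR B - 1) * ln 2 <= E ->
  dur_optimal B E t -> dur_obj B t = INR B * exp (-2 * water_level).
Proof.
  intros HE [Hfeas Hopt]. apply Rle_antisym.
  - rewrite <- dur_obj_water_filling. apply Hopt, water_filling_feasible, HE.
  - apply dur_obj_ge_water_filling, Hfeas.
Qed.

Lemma water_filling_value_closed_form :
  INR B * exp (-2 * water_level) = INR B / 2 * 2 ^ B * exp (- (E / (2 * INR B))).
Proof.
  replace (-2 * water_level) with (INR (B - 1) * ln 2 + - (E / (2 * INR B))).
  - rewrite exp_plus, exp_INR_mult_ln by lra.
    replace (2 ^ B) with (2 * 2 ^ (B - 1)).
    + field.
    + replace B with (S (B - 1)) at 2 by lia. reflexivity.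
  - rewrite minus_INR by exact B_pos. unfold water_level. simpl INR. field. lra.
Qed.

Lemma dur_obj_uniform :
  dur_obj B (t0 B E) = (4 ^ B - 1) / 3 * exp (- (E / (2 * INR B))).
Proof.
  unfold dur_obj, t0.
  rewrite (rsum_ext B _ (fun b => exp (- (E / (2 * INR B))) * 4 ^ b)).
  - rewrite rsum_scal, rsum_pow by lra. field.
  - intros b _. rewrite Rmult_comm. do 2 f_equal. field. lra.
Qed.

End WaterFilling.

Theorem theorem5 (B : nat) (E c : R) (tt : nat -> R) :
  (1 <= B)%nat -> 0 < E -> 0 < c ->
  dur_optimal B E tt ->
  E > 2 * INR B * (INR B - 1) * ln 2 ->
  MSE c B i0 tt = c * (INR B / 2) * 2 ^ B * exp (- (E / (2 * INR B))) /\
  MSE c B i0 (t0 B E) = c * ((4 ^ B - 1) / 3) * exp (- (E / (2 * INR B))) /\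
  MSE c B i0 tt / MSE c B i0 (t0 B E) = (3 * INR B / 2) * (2 ^ B / (4 ^ B - 1)).
Proof.
  intros HB _ Hc Hopt HE.
  assert (Hopt_mse : MSE c B i0 tt = c * (INR B / 2) * 2 ^ B * exp (- (E / (2 * INR B)))).
  { rewrite MSE_i0, (dur_optimal_value B E HB tt ltac:(lra) Hopt).
    rewrite water_filling_value_closed_form by exact HB. ring. }
  assert (Huniform_mse : MSE c B i0 (t0 B E)
                         = c * ((4 ^ B - 1) / 3) * exp (- (E / (2 * INR B)))).
  { rewrite MSE_i0, dur_obj_uniform by exact HB. ring. }
  split; [exact Hopt_mse|]. split; [exact Huniform_mse|].
  rewrite Hopt_mse, Huniform_mse.
  assert (1 < 4 ^ B) by (apply Rlt_pow_R1; lra || lia).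
  pose proof (exp_pos (- (E / (2 * INR B)))).
  field. repeat split; lra.
Qed.
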